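(* Let $q=2^h$. In ${\rm PG}(4,q)$ with homogeneous coordinates $(X_1,\dots,X_5)$ let $\ell$ be the line $X_1=X_4=X_5=0$, $\Sigma$ the solid $X_1=0$, and $\mathcal H$ the hyperbolic quadric of $\Sigma$ with equation $X_2X_5+X_3X_4=0$. Let $\mathcal W(3,q)$ be the symplectic polar space of $\Sigma$ whose lines are the lines of $\Sigma$ that are totally isotropic for the alternating form $B(x,y)=x_2y_5+x_5y_2+x_3y_4+x_4y_3$ (these are the lines contained in $\mathcal H$ together with the lines of $\Sigma$ tangent to $\mathcal H$). Let $\mathcal T$ be the set of lines of $\mathcal W(3,q)$ having exactly one point in common with $\mathcal H\setminus\ell$. For $b\in{\rm GF}(q)$ let $$M_{1,b,1,0}=\begin{pmatrix}1&0&0&0&0\\0&1&0&b&0\\0&0&1&0&b\\0&0&0&1&0\\0&0&0&0&1\end{pmatrix},$$ and let $G_2=\{M_{1,b,1,0}: b\in{\rm GF}(q)\}$, acting on points (column vectors) by left multiplication. Then for every line $t\in\mathcal T$, the set $t^{G_2}\cup\{\ell\}$ is a regulus of $\Sigma$. *)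

(* Vectors are column vectors 'cV[F]_5; coordinates X_1..X_5 are entries 0..4.
   A projective subspace is represented by the set of its NONZERO vectors
   (this representation is canonical: equal subspaces give equal sets). *)
From HB Require Import structures.
From mathcomp Require Import all_boot all_order all_algebra.
Set Implicit Arguments. Unset Strict Implicit. Unset Printing Implicit Defensive.
Import Order.TTheory GRing.Theory.
Local Open Scope ring_scope.

Section PG4.
Variable F : finFieldType.
Local Notation V := 'cV[F]_5.

Definition X (i : nat) (v : V) : F := v (inord i.-1) 0.

Definition span2 (u w : V) : {set V} :=
  [set x | (x != 0) && [exists a : F, exists b : F, x == a *: u + b *: w]].

Definition is_line (S : {set V}) : Prop :=
  exists u w : V, \rank (row_mx u w) = 2%N /\ S = span2 u w.

Definition pt (v : V) : {set V} := (fun a : F => a *: v) @: [set a : F | a != 0].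
Definition points (S : {set V}) : {set {set V}} := pt @: S.

Definition ell : {set V} :=
  [set v : V | [&& v != 0, X 1 v == 0, X 4 v == 0 & X 5 v == 0]].
Definition Sigma : {set V} := [set v : V | (v != 0) && (X 1 v == 0)].
Definition Hq : {set V} :=
  [set v : V | [&& v != 0, X 1 v == 0 & X 2 v * X 5 v + X 3 v * X 4 v == 0]].

Definition B (x y : V) : F :=
  X 2 x * X 5 y + X 5 x * X 2 y + X 3 x * X 4 y + X 4 x * X 3 y.

Definition W3_line (t : {set V}) : Prop :=
  [/\ is_line t, t \subset Sigma & forall x y, x \in t -> y \in t -> B x y = 0].

Definition in_T (t : {set V}) : Prop :=
  W3_line t /\ #|points (t :&: (Hq :\: ell))| = 1%N.

Definition Mb (b : F) : 'M[F]_5 :=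
  \matrix_(i < 5, j < 5)
    ((i == j)%:R
     + (if ((i : nat) == 1%N) && ((j : nat) == 3%N) then b else 0)
     + (if ((i : nat) == 2%N) && ((j : nat) == 4%N) then b else 0)).

Definition orbitG2 (t : {set V}) : {set {set V}} :=
  [set (fun v : V => Mb b *m v) @: t | b : F].

Definition meet (m l : {set V}) : Prop := m :&: l != set0.

Definition regulus_of_Sigma (R : {set {set V}}) : Prop :=
  [/\ #|R| = #|F|.+1,
      forall l, l \in R -> is_line l /\ l \subset Sigma,
      forall l1 l2, l1 \in R -> l2 \in R -> l1 != l2 -> l1 :&: l2 = set0 &
      forall m, is_line m -> m \subset Sigma ->
        (exists l1 l2 l3, [/\ l1 \in R, l2 \in R, l3 \in R &
                              [/\ l1 != l2, l1 != l3 & l2 != l3]] /\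
                          [/\ meet m l1, meet m l2 & meet m l3]) ->
        forall l, l \in R -> meet m l].
End PG4.

(* In the coordinates x = (X2, X3), y = (X4, X5) of Sigma, ell is the line y = 0 and
   M_{1,b,1,0} acts as (x, y) |-> (x + b y, y).  A line t of T is skew to ell: a point z of t
   on ell lies on H and is B-orthogonal to the point v of t in H \ ell, so v + z would be a
   second point of t in H \ ell.  Hence t is a graph x = A y, its images are the lines
   x - A y = b y, and together with ell they are the lines c2 (x - A y) = c1 y, (c1 : c2) in
   PG(1, q).  A line of Sigma meets the line of parameter c iff a 2 x 2 determinant vanishes,
   and this determinant is a binary quadratic form in c; with three pairwise distinct zeros
   the form vanishes identically. *)

From HB Require Import structures.
From mathcomp Require Import all_boot all_order all_algebra ring.
Set Implicit Arguments. Unset Strict Implicit. Unset Printing Implicit Defensive.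
Import Order.TTheory GRing.Theory.
Local Open Scope ring_scope.

Section PlaneAlgebra.
Variable F : fieldType.

Definition pdet (c c' : F * F) : F := c.1 * c'.2 - c'.1 * c.2.

Lemma dependent2P (a b c d : F) :
  (exists s1 s2, [/\ (s1 != 0) || (s2 != 0), s1 * a + s2 * b = 0 & s1 * c + s2 * d = 0])
  <-> a * d - b * c = 0.
Proof.
split=> [[s1 [s2 [s_nz e1 e2]]] | det0].
  apply/eqP; apply: contraTT s_nz => det_nz.
  have s1E : s1 * (a * d - b * c) = d * (s1 * a + s2 * b) - b * (s1 * c + s2 * d) by ring.
  have s2E : s2 * (a * d - b * c) = a * (s1 * c + s2 * d) - c * (s1 * a + s2 * b) by ring.
  rewrite e1 e2 !mulr0 subrr in s1E s2E.
  move/eqP: s1E; move/eqP: s2E; rewrite !mulf_eq0 (negbTE det_nz) !orbF.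
  by move=> /eqP -> /eqP ->; rewrite eqxx.
have [ab_nz | ab0] := boolP ((a != 0) || (b != 0)).
  exists b, (- a); split; [by rewrite oppr_eq0 orbC | by ring |].
  by rewrite -[RHS]oppr0 -det0; ring.
move: ab0; rewrite negb_or !negbK => /andP [/eqP a0 /eqP b0].
have [cd_nz | cd0] := boolP ((c != 0) || (d != 0)).
  by exists d, (- c); split; [rewrite oppr_eq0 orbC | rewrite a0 b0; ring | ring].
move: cd0; rewrite negb_or !negbK => /andP [/eqP c0 /eqP d0].
by exists 1, 0; rewrite oner_eq0 a0 c0; split => //; ring.
Qed.

Lemma proportional_eq0 (c c' : F * F) (p y : F) : pdet c c' != 0 ->
  c.2 * p = c.1 * y -> c'.2 * p = c'.1 * y -> p = 0 /\ y = 0.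
Proof.
move=> nc e e'.
have pE : pdet c c' * p = c.1 * (c'.2 * p) - c'.1 * (c.2 * p) by rewrite /pdet; ring.
have yE : pdet c c' * y = c'.2 * (c.1 * y) - c.2 * (c'.1 * y) by rewrite /pdet; ring.
rewrite -e -e' in yE; rewrite e e' in pE.
have {pE yE}[/eqP pE /eqP yE] : pdet c c' * p = 0 /\ pdet c c' * y = 0.
  by split; [rewrite pE | rewrite yE]; ring.
by move: pE yE; rewrite !mulf_eq0 (negbTE nc) => /eqP -> /eqP ->.
Qed.

Lemma binary_form_eq0 (f : F * F -> F) (c1 c2 c3 : F * F) :
  (exists a k d, forall c, f c = a * c.1 ^+ 2 + k * (c.1 * c.2) + d * c.2 ^+ 2) ->
  pdet c1 c2 != 0 -> pdet c1 c3 != 0 -> pdet c2 c3 != 0 ->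
  f c1 = 0 -> f c2 = 0 -> f c3 = 0 -> forall c, f c = 0.
Proof.
move=> [a [k [d fE]]] n12 n13 n23; rewrite !fE => z1 z2 z3 c; rewrite fE.
pose D := pdet c1 c2 * pdet c1 c3 * pdet c2 c3.
have D_nz : D != 0 by rewrite !mulf_neq0.
pose q (c : F * F) := a * c.1 ^+ 2 + k * (c.1 * c.2) + d * c.2 ^+ 2.
pose xx (c : F * F) := c.1 ^+ 2; pose xy (c : F * F) := c.1 * c.2.
pose yy (c : F * F) := c.2 ^+ 2.
(* Cramer's rule for the system q c1 = q c2 = q c3 = 0 in a, k, d, of determinant D. *)
have aD : a * D = q c1 * (xy c2 * yy c3 - xy c3 * yy c2) - q c2 * (xy c1 * yy c3 - xy c3 * yy c1)
                  + q c3 * (xy c1 * yy c2 - xy c2 * yy c1).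
  by rewrite /q /D /pdet /xx /xy /yy; ring.
have kD : k * D = q c2 * (xx c1 * yy c3 - xx c3 * yy c1) - q c1 * (xx c2 * yy c3 - xx c3 * yy c2)
                  - q c3 * (xx c1 * yy c2 - xx c2 * yy c1).
  by rewrite /q /D /pdet /xx /xy /yy; ring.
have dD : d * D = q c1 * (xx c2 * xy c3 - xx c3 * xy c2) - q c2 * (xx c1 * xy c3 - xx c3 * xy c1)
                  + q c3 * (xx c1 * xy c2 - xx c2 * xy c1).
  by rewrite /q /D /pdet /xx /xy /yy; ring.
rewrite [q c1]z1 [q c2]z2 [q c3]z3 !mul0r oppr0 !addr0 in aD kD dD.
have coef0 e : e * D = 0 -> e = 0.
  by move/eqP; rewrite mulf_eq0 (negbTE D_nz) orbF => /eqP.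
by rewrite (coef0 _ aD) (coef0 _ kD) (coef0 _ dD); ring.
Qed.

Definition pcoord (o : option F) : F * F := if o is Some b then (b, 1) else (1, 0).

Lemma pdet_pcoord o o' : o != o' -> pdet (pcoord o) (pcoord o') != 0.
Proof.
rewrite /pdet; case: o o' => [b|] [b'|] //=; rewrite ?mulr1 ?mulr0 ?subr0 ?sub0r.
- by rewrite subr_eq0.
- by rewrite oppr_eq0 oner_eq0.
- by rewrite oner_eq0.
Qed.

End PlaneAlgebra.

Section Coordinates.
Variable F : finFieldType.
Local Notation V := 'cV[F]_5.
Implicit Types (u v w z : V) (a b e : F).

Lemma XD i v w : X i (v + w) = X i v + X i w. Proof. by rewrite /X mxE. Qed.
Lemma XZ i a v : X i (a *: v) = a * X i v. Proof. by rewrite /X mxE. Qed.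
Lemma X0 i : X i (0 : V) = 0. Proof. by rewrite /X mxE. Qed.

Lemma eq_X v w : X 1 v = X 1 w -> X 2 v = X 2 w -> X 3 v = X 3 w ->
  X 4 v = X 4 w -> X 5 v = X 5 w -> v = w.
Proof.
move=> e1 e2 e3 e4 e5; apply/matrixP => i j; rewrite (ord1 j) -[i]inord_val.
by case: i => [[|[|[|[|[|//]]]]] ?].
Qed.

Lemma X_mulmx i (M : 'M[F]_5) v :
  X i (M *m v) = \sum_(j < 5) M (inord i.-1) j * X j.+1 v.
Proof. by rewrite /X mxE; apply: eq_bigr => j _; rewrite inord_val. Qed.

Lemma X_Mb b v :
  [/\ X 1 (Mb b *m v) = X 1 v, X 2 (Mb b *m v) = X 2 v + b * X 4 v,
      X 3 (Mb b *m v) = X 3 v + b * X 5 v, X 4 (Mb b *m v) = X 4 v &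
      X 5 (Mb b *m v) = X 5 v].
Proof.
by split; rewrite X_mulmx !big_ord_recl big_ord0 !mxE -!val_eqE /= !inordK //=; ring.
Qed.

Lemma MbK b v : Mb b *m (Mb (- b) *m v) = v.
Proof.
have [E1 E2 E3 E4 E5] := X_Mb (- b) v.
have [G1 G2 G3 G4 G5] := X_Mb b (Mb (- b) *m v).
by apply: eq_X; rewrite ?G1 ?G2 ?G3 ?G4 ?G5 ?E1 ?E2 ?E3 ?E4 ?E5 //; ring.
Qed.

Lemma Mb_eq0 b v : Mb b *m v = 0 -> v = 0.
Proof. by move=> Mv0; rewrite -(MbK (- b) v) opprK Mv0 mulmx0. Qed.

End Coordinates.

Section Lines.
Variable F : finFieldType.
Local Notation V := 'cV[F]_5.
Implicit Types (u v w z : V) (a e : F).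

Lemma span2P u w z :
  reflect (z != 0 /\ exists a e, z = a *: u + e *: w) (z \in span2 u w).
Proof.
rewrite inE; apply: (iffP andP) => [[-> /existsP [a /existsP [e /eqP ->]]] | [-> [a [e ->]]]].
  by split=> //; exists a, e.
by split=> //; apply/existsP; exists a; apply/existsP; exists e.
Qed.

Lemma span2D u w v z : v \in span2 u w -> z \in span2 u w -> v + z != 0 ->
  v + z \in span2 u w.
Proof.
move=> /span2P [_ [a [e ->]]] /span2P [_ [a' [e' ->]]] vz_nz.
by apply/span2P; split=> //; exists (a + a'), (e + e'); rewrite !scalerDl addrACA.
Qed.

Lemma row_mx2_mul u w (k : 'cV[F]_(1 + 1)) :
  row_mx u w *m k = k (lshift 1 0) 0 *: u + k (rshift 1 0) 0 *: w.
Proof.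
apply/matrixP => i j; rewrite !mxE big_split_ord !big_ord1 row_mxEl row_mxEr (ord1 j).
by rewrite mulrC [w i 0 * _]mulrC.
Qed.

Lemma rank_row_mx2P u w :
  \rank (row_mx u w) = 2 <-> forall a e, a *: u + e *: w = 0 -> a = 0 /\ e = 0.
Proof.
rewrite -mxrank_tr; split => [rk2 a e uw0 | uw_free].
  pose k : 'cV[F]_(1 + 1) := col_mx a%:M e%:M.
  have [ka ke] : k (lshift 1 0) 0 = a /\ k (rshift 1 0) 0 = e.
    by rewrite col_mxEu col_mxEd !mxE !mulr1n.
  have : k^T *m (row_mx u w)^T == 0 by rewrite -trmx_mul row_mx2_mul ka ke uw0 trmx0.
  rewrite mulmx_free_eq0 /row_free ?rk2 // -trmx0 => /eqP/trmx_inj k0.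
  by rewrite -ka -ke k0 !mxE.
apply/eqP/inj_row_free => v /(congr1 trmx); rewrite trmx_mul trmxK row_mx2_mul trmx0.
move=> /uw_free [v1 v2]; rewrite !mxE in v1 v2.
apply/matrixP => i j; rewrite (ord1 i) mxE.
by case: (split_ordP j) => k ->; rewrite (ord1 k).
Qed.

Lemma free2_neq0 u w : \rank (row_mx u w) = 2 -> u != 0 /\ w != 0.
Proof.
move/rank_row_mx2P => uw_free; split; apply/eqP => v0.
  have := uw_free 1 0; rewrite v0 scaler0 scale0r addr0 => /(_ erefl) [/eqP].
  by rewrite oner_eq0.
have := uw_free 0 1; rewrite v0 scaler0 scale0r addr0 => /(_ erefl) [_ /eqP].
by rewrite oner_eq0.
Qed.

Lemma line_neq0 (l : {set V}) : is_line l -> l != set0.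
Proof.
case=> u [w [/free2_neq0 [u_nz _] ->]]; apply/set0Pn; exists u.
by apply/span2P; split=> //; exists 1, 0; rewrite scale1r scale0r addr0.
Qed.

Lemma span2_Sigma u w : \rank (row_mx u w) = 2 -> span2 u w \subset Sigma F ->
  X 1 u = 0 /\ X 1 w = 0.
Proof.
move=> /free2_neq0 [u_nz w_nz] /subsetP uwS.
have uS : u \in span2 u w.
  by apply/span2P; split=> //; exists 1, 0; rewrite scale1r scale0r addr0.
have wS : w \in span2 u w.
  by apply/span2P; split=> //; exists 0, 1; rewrite scale1r scale0r add0r.
by move: (uwS _ uS) (uwS _ wS); rewrite !inE => /andP [_ /eqP ->] /andP [_ /eqP ->].
Qed.

Lemma line_image (M : 'M[F]_5) (l : {set V}) : (forall v, M *m v = 0 -> v = 0) ->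
  is_line l -> is_line ((fun v => M *m v) @: l).
Proof.
move=> M_inj [u [w [/rank_row_mx2P uw_free ->]]].
have M_comb a e : M *m (a *: u + e *: w) = a *: (M *m u) + e *: (M *m w).
  by rewrite mulmxDr !scalemxAr.
exists (M *m u), (M *m w); split.
  by apply/rank_row_mx2P => a e; rewrite -M_comb => /M_inj /uw_free.
apply/setP => z; apply/imsetP/span2P => [[v /span2P [v_nz [a [e vE]]] ->] | [z_nz [a [e zE]]]].
  split; last by exists a, e; rewrite vE M_comb.
  by apply: contraNneq v_nz => /M_inj ->.
exists (a *: u + e *: w); last by rewrite zE M_comb.
apply/span2P; split; last by exists a, e.
by apply: contraNneq z_nz => uw0; rewrite zE -M_comb uw0 mulmx0.
Qed.

Lemma ell_line : is_line (ell F).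
Proof.
have Xe i k : (i < 5)%N -> (k < 5)%N -> X i.+1 (delta_mx (inord k) 0 : V) = (i == k)%:R.
  by move=> i_lt k_lt; rewrite /X mxE -val_eqE /= !inordK // eqxx andbT.
pose e2 : V := delta_mx (inord 1) 0; pose e3 : V := delta_mx (inord 2) 0.
have Xcomb i a e : (i < 5)%N ->
    X i.+1 (a *: e2 + e *: e3) = a * (i == 1)%:R + e * (i == 2)%:R.
  by move=> i_lt; rewrite XD !XZ !Xe.
exists e2, e3; split.
  apply/rank_row_mx2P => a e e0.
  have := Xcomb 1%N a e isT; have := Xcomb 2%N a e isT; rewrite e0 !X0 /=.
  by rewrite !mulr1 !mulr0 addr0 add0r => <- <-.
apply/setP => z; rewrite inE; apply/idP/span2P => [/and4P [z_nz /eqP z1 /eqP z4 /eqP z5] | ].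
  split=> //; exists (X 2 z), (X 3 z).
  apply: eq_X; rewrite ?(Xcomb 0%N) ?(Xcomb 1%N) ?(Xcomb 2%N) ?(Xcomb 3%N) ?(Xcomb 4%N) //=;
    by rewrite ?z1 ?z4 ?z5; ring.
case=> z_nz [a [e zE]]; rewrite z_nz zE (Xcomb 0%N) ?(Xcomb 3%N) ?(Xcomb 4%N) //=.
by rewrite !mulr0 addr0 eqxx.
Qed.

End Lines.

Section Skew.
Variable F : finFieldType.
Local Notation V := 'cV[F]_5.
Implicit Types (v z : V) (k : F).

Definition qH z : F := X 2 z * X 5 z + X 3 z * X 4 z.

Lemma qH_add v z : qH (v + z) = qH v + qH z + B v z.
Proof. by rewrite /qH /B !XD; ring. Qed.

Lemma pt_eq v z : pt v = pt z -> exists2 k, k != 0 & z = k *: v.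
Proof.
move=> vz; have : z \in pt v.
  by rewrite vz; apply/imsetP; exists 1; rewrite ?inE ?oner_eq0 ?scale1r.
by case/imsetP => k; rewrite inE => k_nz ->; exists k.
Qed.

Lemma in_T_skew t : in_T t -> forall z, z \in t -> z \notin ell F.
Proof.
case=> [[[u [w [_ tE]]] _ t_iso] /eqP/cards1P [P tP]] z zt; apply/negP => z_ell.
have : P \in points (t :&: (Hq F :\: ell F)) by rewrite tP set11.
case/imsetP => v; rewrite in_setI in_setD => /and3P [vt v_ell vH] PE.
move: z_ell vH v_ell; rewrite !inE => /and4P [z_nz /eqP z1 /eqP z4 /eqP z5].
move=> /and3P [v_nz /eqP v1 /eqP Qv]; rewrite v_nz v1 eqxx /= => v45.
have [s1 s4 s5] : [/\ X 1 (v + z) = X 1 v, X 4 (v + z) = X 4 v & X 5 (v + z) = X 5 v].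
  by rewrite !XD z1 z4 z5 !addr0.
have s_ell : v + z \notin ell F.
  by rewrite inE s4 s5; apply: contra v45 => /and4P [_ _ -> ->].
have s_nz : v + z != 0 by apply: contraNneq v45 => s0; rewrite -s4 -s5 s0 !X0 eqxx.
have sH : v + z \in Hq F.
  rewrite inE s_nz s1 v1 eqxx /=; apply/eqP.
  by rewrite -/(qH (v + z)) qH_add t_iso // /qH Qv z4 z5; ring.
have : pt (v + z) \in points (t :&: (Hq F :\: ell F)).
  by apply: imset_f; rewrite in_setI in_setD s_ell sH andbT tE span2D -?tE.
rewrite tP inE PE eq_sym => /eqP /pt_eq [k _ sE].
have [k1 | k_neq1] := eqVneq k 1.
  by move: sE; rewrite k1 scale1r -{2}[v]addr0 => /addrI z0; rewrite z0 eqxx in z_nz.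
have fixed0 i : X i (v + z) = X i v -> X i v = 0.
  move=> si; have /eqP : (k - 1) * X i v = 0 by rewrite mulrBl -XZ -sE si mul1r subrr.
  by rewrite mulf_eq0 subr_eq0 (negbTE k_neq1) => /eqP.
by move: v45; rewrite fixed0 // fixed0 // eqxx.
Qed.

End Skew.

Section Regulus.
Variable F : finFieldType.
Local Notation V := 'cV[F]_5.
Implicit Types (v z : V) (a b e : F) (c : F * F).
Variables u w : V.
Hypotheses (u1 : X 1 u = 0) (w1 : X 1 w = 0).

Definition del : F := X 4 u * X 5 w - X 4 w * X 5 u.

Lemma del_neq0 : \rank (row_mx u w) = 2 ->
  (forall z, z \in span2 u w -> z \notin ell F) -> del != 0.
Proof.
move=> /rank_row_mx2P uw_free uw_skew; apply/eqP => /dependent2P [s1 [s2 [s_nz e4 e5]]].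
have z_nz : s1 *: u + s2 *: w != 0.
  by apply: contraTneq s_nz => /uw_free [-> ->]; rewrite eqxx.
have /uw_skew : s1 *: u + s2 *: w \in span2 u w by apply/span2P; split=> //; exists s1, s2.
by rewrite inE z_nz !XD !XZ u1 w1 e4 e5 !mulr0 addr0 eqxx.
Qed.

Hypothesis del_nz : del != 0.

Definition ucoord z : F := (X 5 w * X 4 z - X 4 w * X 5 z) / del.
Definition wcoord z : F := (X 4 u * X 5 z - X 5 u * X 4 z) / del.
(* (ucoord z, wcoord z) are the coordinates, in the basis u, w, of the point of t = <u, w>
   having the same (X4, X5) as z; thus dev i z is the X_i entry of x - A y when t is the
   graph x = A y. *)
Definition dev i z : F := X i z - (ucoord z * X i u + wcoord z * X i w).
Definition rdev c i z : F := c.2 * dev i z - c.1 * X i.+2 z.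
Definition regline c : {set V} :=
  [set z | [&& z != 0, X 1 z == 0, rdev c 2 z == 0 & rdev c 3 z == 0]].

Lemma ucoord_comb a e : ucoord (a *: u + e *: w) = a.
Proof.
by rewrite /ucoord !XD !XZ -[RHS](mulfK del_nz); congr (_ / _); rewrite /del; ring.
Qed.

Lemma wcoord_comb a e : wcoord (a *: u + e *: w) = e.
Proof.
by rewrite /wcoord !XD !XZ -[RHS](mulfK del_nz); congr (_ / _); rewrite /del; ring.
Qed.

Lemma dev_comb i a e : dev i (a *: u + e *: w) = 0.
Proof. by rewrite /dev ucoord_comb wcoord_comb !XD !XZ subrr. Qed.

Lemma rdev_lin c i s1 s2 p r :
  rdev c i (s1 *: p + s2 *: r) = s1 * rdev c i p + s2 * rdev c i r.
Proof. by rewrite /rdev /dev /ucoord /wcoord !XD !XZ; ring. Qed.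

Lemma rdev_Mb b i v : (i == 2%N) || (i == 3%N) -> rdev (b, 1) i (Mb b *m v) = dev i v.
Proof.
have [E1 E2 E3 E4 E5] := X_Mb b v.
by case/orP => /eqP ->; rewrite /rdev /dev /ucoord /wcoord /= ?E2 ?E3 E4 E5; ring.
Qed.

Lemma ucoord_wcoord_y z : ucoord z * X 4 u + wcoord z * X 4 w = X 4 z /\
                 ucoord z * X 5 u + wcoord z * X 5 w = X 5 z.
Proof.
rewrite /ucoord /wcoord !(mulrAC _ del^-1) -!mulrDl.
by split; rewrite -[RHS](mulfK del_nz); congr (_ / _); rewrite /del; ring.
Qed.

Lemma dev0_span z : X 1 z = 0 -> dev 2 z = 0 -> dev 3 z = 0 ->
  z = ucoord z *: u + wcoord z *: w.
Proof.
move=> z1 /eqP d2 /eqP d3; rewrite !subr_eq0 in d2 d3; have [y4 y5] := ucoord_wcoord_y z.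
by apply: eq_X; rewrite XD !XZ ?z1 ?u1 ?w1 ?(eqP d2) ?(eqP d3) ?y4 ?y5 ?mulr0 ?addr0.
Qed.

Lemma dev0_eq0 z : X 1 z = 0 -> dev 2 z = 0 -> dev 3 z = 0 ->
  X 4 z = 0 -> X 5 z = 0 -> z = 0.
Proof.
move=> z1 d2 d3 z4 z5; rewrite (dev0_span z1 d2 d3) /ucoord /wcoord z4 z5.
by rewrite !mulr0 subrr !mul0r !scale0r addr0.
Qed.

Lemma orbit_regline b : (fun v => Mb b *m v) @: span2 u w = regline (b, 1).
Proof.
apply/setP => z; rewrite [in RHS]inE.
apply/imsetP/and4P => [[v /span2P [v_nz [a [e vE]]] ->] | [z_nz /eqP z1 /eqP r2 /eqP r3]].
  have [E1 _ _ _ _] := X_Mb b v.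
  split; first by apply: contraNneq v_nz => /Mb_eq0 ->.
  - by rewrite E1 vE XD !XZ u1 w1 !mulr0 addr0.
  - by rewrite rdev_Mb // vE dev_comb.
  - by rewrite rdev_Mb // vE dev_comb.
set v := Mb (- b) *m z; have vb : Mb b *m v = z := MbK b z.
exists v => //; have [v1 _ _ _ _] := X_Mb (- b) z.
have [d2 d3] : dev 2 v = 0 /\ dev 3 v = 0.
  by rewrite -[dev 2 v](rdev_Mb b) // -[dev 3 v](rdev_Mb b) // vb.
apply/span2P; split; last by exists (ucoord v), (wcoord v); apply: dev0_span; rewrite // v1.
by apply: contraNneq z_nz => v0; rewrite -vb v0 mulmx0.
Qed.

Lemma ell_regline : ell F = regline (1, 0).
Proof. by apply/setP => z; rewrite !inE /rdev /= !mul0r !mul1r !sub0r !oppr_eq0. Qed.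

Lemma regline_disjoint c c' : pdet c c' != 0 -> regline c :&: regline c' = set0.
Proof.
move=> ncc'; apply/setP => z; rewrite !inE.
apply/negP => /andP [/and4P [z_nz /eqP z1 /eqP r2 /eqP r3] /and4P [_ _ /eqP r2' /eqP r3']].
move: r2 r3 r2' r3'; rewrite /rdev => /eqP; rewrite subr_eq0 => /eqP r2.
move=> /eqP; rewrite subr_eq0 => /eqP r3 /eqP; rewrite subr_eq0 => /eqP r2'.
move=> /eqP; rewrite subr_eq0 => /eqP r3'.
have [d2 z4] := proportional_eq0 ncc' r2 r2'; have [d3 z5] := proportional_eq0 ncc' r3 r3'.
by move: z_nz; rewrite (dev0_eq0 z1 d2 d3 z4 z5) eqxx.
Qed.

Lemma span2_line : is_line (span2 u w).
Proof.
exists u, w; split=> //; apply/rank_row_mx2P => a e uw0.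
have [a4 a5] : a * X 4 u + e * X 4 w = 0 /\ a * X 5 u + e * X 5 w = 0.
  by rewrite -!XZ -!XD uw0 !X0.
have : ~~ ((a != 0) || (e != 0)).
  by apply: contra del_nz => ae_nz; apply/eqP/dependent2P; exists a, e.
by rewrite negb_or !negbK => /andP [/eqP -> /eqP ->].
Qed.

Lemma meet_regline p r c :
  \rank (row_mx p r) = 2 -> span2 p r \subset Sigma F ->
  meet (span2 p r) (regline c) <->
  rdev c 2 p * rdev c 3 r - rdev c 2 r * rdev c 3 p = 0.
Proof.
move=> /rank_row_mx2P pr_free /subsetP pr_Sigma.
rewrite -dependent2P; split=> [/set0Pn [z] | [s1 [s2 [s_nz r2 r3]]]].
  rewrite inE => /andP [/span2P [z_nz [s1 [s2 zE]]]].
  rewrite inE zE !rdev_lin => /and4P [_ _ /eqP r2 /eqP r3]; exists s1, s2; split=> //.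
  apply: contraNT z_nz; rewrite negb_or !negbK => /andP [/eqP s1_0 /eqP s2_0].
  by rewrite zE s1_0 s2_0 !scale0r addr0.
set z := s1 *: p + s2 *: r.
have z_nz : z != 0 by apply: contraTneq s_nz => /pr_free [-> ->]; rewrite eqxx.
have zS : z \in span2 p r by apply/span2P; split=> //; exists s1, s2.
apply/set0Pn; exists z; rewrite inE zS inE z_nz !rdev_lin r2 r3 eqxx andbT /=.
by move: (pr_Sigma _ zS); rewrite inE andbT => /andP [].
Qed.

Lemma regline_line o : is_line (regline (pcoord o)).
Proof.
case: o => [b|]; last by rewrite /= -ell_regline; apply: ell_line.
by rewrite /= -orbit_regline; apply: line_image span2_line; apply: Mb_eq0.
Qed.

Lemma regline_inj : injective (fun o => regline (pcoord o)).
Proof.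
move=> o o' oo'; apply/eqP; apply: contraTT (line_neq0 (regline_line o)) => /pdet_pcoord.
by move=> /regline_disjoint; rewrite oo' setIid => ->; rewrite eqxx.
Qed.

Lemma meet3_regline p r o1 o2 o3 :
  \rank (row_mx p r) = 2 -> span2 p r \subset Sigma F ->
  [/\ o1 != o2, o1 != o3 & o2 != o3] ->
  [/\ meet (span2 p r) (regline (pcoord o1)), meet (span2 p r) (regline (pcoord o2)) &
      meet (span2 p r) (regline (pcoord o3))] ->
  forall o, meet (span2 p r) (regline (pcoord o)).
Proof.
move=> pr_rank pr_Sigma [n12 n13 n23]; have meetE c := meet_regline c pr_rank pr_Sigma.
move=> [/meetE m1 /meetE m2 /meetE m3] o; apply/meetE.
apply: (@binary_form_eq0 _ (fun c => rdev c 2 p * rdev c 3 r - rdev c 2 r * rdev c 3 p) _ _ _ _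
          (pdet_pcoord n12) (pdet_pcoord n13) (pdet_pcoord n23) m1 m2 m3).
exists (X 4 p * X 5 r - X 4 r * X 5 p),
       (dev 2 r * X 5 p + X 4 r * dev 3 p - dev 2 p * X 5 r - X 4 p * dev 3 r),
       (dev 2 p * dev 3 r - dev 2 r * dev 3 p).
by move=> c; rewrite /rdev; ring.
Qed.

Lemma regline_regulus : regulus_of_Sigma [set regline (pcoord o) | o : option F].
Proof.
have neq_pcoord o o' : regline (pcoord o) != regline (pcoord o') -> o != o'.
  by apply: contraNneq => ->.
split.
- by rewrite card_imset ?card_option //; apply: regline_inj.
- move=> _ /imsetP [o _ ->]; split; first exact: regline_line.
  by apply/subsetP => z; rewrite !inE => /and4P [-> -> _ _].
- move=> _ _ /imsetP [o1 _ ->] /imsetP [o2 _ ->] /neq_pcoord o12.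
  exact/regline_disjoint/pdet_pcoord.
move=> m [p [r [pr_rank ->]]] pr_Sigma.
case=> [l1 [l2 [l3 [[/imsetP [o1 _ ->] /imsetP [o2 _ ->] /imsetP [o3 _ ->]]]]]].
move=> [/neq_pcoord n12 /neq_pcoord n13 /neq_pcoord n23] meets _ /imsetP [o _ ->].
exact: meet3_regline pr_rank pr_Sigma (And3 n12 n13 n23) meets _.
Qed.

Lemma orbitG2_ell :
  orbitG2 (span2 u w) :|: [set ell F] = [set regline (pcoord o) | o : option F].
Proof.
apply/setP => l; rewrite in_setU in_set1.
apply/orP/imsetP => [[/imsetP [b _ ->] | /eqP ->] | [[b|] _ ->]].
- by exists (Some b); rewrite //= orbit_regline.
- by exists None; rewrite //= ell_regline.
- by left; rewrite /= -orbit_regline; apply/imsetP; exists b.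
- by right; rewrite /= -ell_regline.
Qed.

End Regulus.

Theorem lemma3p2 (F : finFieldType) (h : nat) (hq : #|F| = (2 ^ h)%N)
  (t : {set 'cV[F]_5}) :
  in_T t -> regulus_of_Sigma (orbitG2 t :|: [set ell F]).
Proof.
move=> tT; have t_skew := in_T_skew tT.
case: tT => [[[u [w [uw_rank tE]]] t_Sigma _] _]; subst t.
have [u1 w1] := span2_Sigma uw_rank t_Sigma.
have del_nz := del_neq0 u1 w1 uw_rank t_skew.
by rewrite (orbitG2_ell u1 w1 del_nz); apply: regline_regulus.
Qed.
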